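(* Let $f(z)=\sum_{n\ge1} f_n z^n$ be a formal power series over $\mathbb{C}$ with $f_1\neq 0$, and let $f'(z)$ be its formal derivative. The Riordan matrix $\left(\frac{z f'(z)}{f(z)}, f(z)\right)$ (an element of the Hitting time subgroup) is a pseudo-involution if and only if $-f(-f(z))=z$.
   Context: A Riordan matrix is a pair $(g(z),f(z))$ of formal power series over $\mathbb{C}$ with $g(z)=\sum_{n\ge 0} g_n z^n$, $g_0\neq 0$, and $f(z)=\sum_{n\ge 1} f_n z^n$ with $f_1\neq 0$; it represents the infinite lower-triangular matrix whose $k$-th column ($k\ge 0$) has generating function $g(z)f(z)^k$. Riordan matrices form a group under matrix multiplication, where $(g(z),f(z))*(h(z),l(z))=(g(z)h(f(z)),\,l(f(z)))$ and the identity is $(1,z)$. Let $M=(1,-z)$. A Riordan matrix $L$ is called a pseudo-involution if $(L*M)*(L*M)=(1,z)$. The quotient $z f'(z)/f(z)$ is the formal power series obtained by cancelling the factor $z$ (it has constant term $1$). *)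

From HB Require Import structures.
From mathcomp Require Import all_boot all_order all_algebra.
From mathcomp Require Import complex reals.
Set Implicit Arguments. Unset Strict Implicit. Unset Printing Implicit Defensive.
Import Order.TTheory GRing.Theory Num.Theory.
Local Open Scope ring_scope.

Section FPS.
Variable C : fieldType.

Definition fps := nat -> C.

Definition fps_const (c : C) : fps := fun n => if n == 0%N then c else 0.
Definition fps_one : fps := fps_const 1.
Definition fps_X : fps := fun n => if n == 1%N then 1 else 0.
Definition fps_opp (a : fps) : fps := fun n => - a n.

Definition fps_mul (a b : fps) : fps :=
  fun n => \sum_(i < n.+1) a i * b (n - i)%N.

Definition fps_pow (a : fps) (k : nat) : fps := iter k (fps_mul a) fps_one.

(* composition g(f(z)); meaningful when f 0 = 0 *)
Definition fps_comp (g f : fps) : fps :=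
  fun n => \sum_(k < n.+1) g k * fps_pow f k n.

Definition fps_deriv (a : fps) : fps := fun n => (n.+1)%:R * a n.+1.

Definition fps_divX (a : fps) : fps := fun n => a n.+1.

(* multiplicative inverse (for a 0 <> 0): b_0 = 1/a_0,
   b_n = -(1/a_0) sum_{i=1}^n a_i b_{n-i} *)
Fixpoint fps_inv_upto (a : fps) (n : nat) : seq C :=
  match n with
  | 0%N => [:: (a 0%N)^-1]
  | n'.+1 => let s := fps_inv_upto a n' in
      rcons s (- (a 0%N)^-1 *
               \sum_(j < n'.+1) a j.+1 * nth 0 s (n' - j)%N)
  end.
Definition fps_inv (a : fps) : fps := fun n => nth 0 (fps_inv_upto a n) n.

(* z f'(z) / f(z), computed as f'(z) / (f(z)/z) *)
Definition zfprime_over_f (f : fps) : fps :=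
  fps_mul (fps_deriv f) (fps_inv (fps_divX f)).

Definition riordan := (fps * fps)%type.

Definition riordan_mul (A B : riordan) : riordan :=
  (fps_mul A.1 (fps_comp B.1 A.2), fps_comp B.2 A.2).

Definition riordan_id : riordan := (fps_one, fps_X).

Definition riordan_M : riordan := (fps_one, fps_opp fps_X).

Definition pseudo_involution (L : riordan) : Prop :=
  riordan_mul (riordan_mul L riordan_M) (riordan_mul L riordan_M) = riordan_id.

End FPS.

From HB Require Import structures.
From mathcomp Require Import all_boot all_order all_algebra.
From mathcomp Require Import complex reals.
From mathcomp Require Import ring.
From Stdlib Require Import FunctionalExtensionality.
Import Order.TTheory GRing.Theory Num.Theory.
Local Open Scope ring_scope.

(* Write g = z f'/f and h = -f.  Right multiplication by
   M = (1, -z) sends L = (g, f) to L*M = (g, h), so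
     (L*M)*(L*M) = (g * g(h), h(h))   and   h(h) = -f(-f).
   Hence the second component of (L*M)^2 is z exactly when -f(-f(z)) = z,
   and it remains to show that h(h) = z forces g * g(h) = 1.  Writing
   f = z D, differentiating h(h) = z gives f'(h) f' = 1, and cancelling z
   in h(h) = D(h) D z gives D(h) D = 1; since g = f'/D this yields
   g * g(h) = (f'(h) f') / (D(h) D) = 1.
   Formal power series are bare coefficient sequences, so the algebra is
   carried out on polynomials: a series is approximated below degree m by a
   polynomial (its truncation), every series operation is compatible with
   approximation, and two series are equal when they share a polynomial
   approximation at every order. *)

Section TruncatedSeries.
Variable C : fieldType.
Implicit Types (a b f g : fps C) (p q r : {poly C}).

Definition approx (m : nat) a p := forall i, (i < m)%N -> a i = p`_i.

Definition eq_upto (m : nat) p q := forall i, (i < m)%N -> p`_i = q`_i.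

Lemma eq_upto_refl m p : eq_upto m p p.
Proof. by []. Qed.

Lemma eq_upto_sym {m p q} : eq_upto m p q -> eq_upto m q p.
Proof. by move=> h i hi; rewrite h. Qed.

Lemma eq_upto_trans {m p q r} : eq_upto m p q -> eq_upto m q r -> eq_upto m p r.
Proof. by move=> h1 h2 i hi; rewrite h1 ?h2. Qed.

Lemma eq_upto_le {m m' p q} : (m' <= m)%N -> eq_upto m p q -> eq_upto m' p q.
Proof. by move=> le h i hi; apply: h; apply: leq_trans le. Qed.

(* Coefficients of a product below m only involve coefficients below m. *)
Lemma eq_upto_mul {m p p' q q'} :
  eq_upto m p p' -> eq_upto m q q' -> eq_upto m (p * q) (p' * q').
Proof.
move=> hp hq i hi; rewrite !coefM; apply: eq_bigr => j _.
have lt_j : (j < m)%N by apply: leq_ltn_trans hi; rewrite -ltnS.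
have lt_ij : (i - j < m)%N by apply: leq_ltn_trans hi; apply: leq_subr.
by rewrite hp ?hq.
Qed.

Lemma eq_upto_pow {m p p'} k : eq_upto m p p' -> eq_upto m (p ^+ k) (p' ^+ k).
Proof. by move=> h; elim: k => [|k IH]; rewrite ?expr0 // !exprS; apply: eq_upto_mul. Qed.

Lemma eq_upto_deriv {m p q} : eq_upto m.+1 p q -> eq_upto m p^`() q^`().
Proof. by move=> h i hi; rewrite !coef_deriv h. Qed.

Lemma eq_upto_mulXK {m p q} : eq_upto m.+1 (p * 'X) (q * 'X) -> eq_upto m p q.
Proof. by move=> h i hi; have := h i.+1 hi; rewrite !coefMX. Qed.

Lemma comp_polyNl p r : (- p) \Po r = - (p \Po r).
Proof. by rewrite -sub0r comp_polyB comp_polyC sub0r. Qed.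

Lemma poly_divXK {r} : r`_0 = 0 -> r = drop_poly 1 r * 'X.
Proof.
move=> r0; rewrite -[LHS](poly_take_drop 1) expr1.
suff -> : take_poly 1 r = 0 by rewrite add0r.
by apply/polyP => -[|j]; rewrite coef_take_poly coef0.
Qed.

Lemma comp_divX p r : p`_0 = 0 -> p \Po r = (drop_poly 1 p \Po r) * r.
Proof. by move=> p0; rewrite {1}(poly_divXK p0) comp_polyM comp_polyX. Qed.

Lemma coef_pow_small r k i : r`_0 = 0 -> (i < k)%N -> (r ^+ k)`_i = 0.
Proof. by move=> r0 ik; rewrite (poly_divXK r0) exprMn coefMXn ik. Qed.

(* When r(0) = 0 only the powers r^k with k <= i contribute to the i-th
   coefficient of p(r): this is the series composition formula. *)
Lemma coef_comp_trunc p r i : r`_0 = 0 ->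
  (p \Po r)`_i = \sum_(k < i.+1) p`_k * (r ^+ k)`_i.
Proof.
move=> r0; pose N := (size p + i.+1)%N; pose T k := p`_k * (r ^+ k)`_i.
rewrite coef_comp_poly (big_ord_widen N T) ?leq_addr //.
rewrite [RHS](big_ord_widen N T) ?leq_addl //.
rewrite [LHS]big_mkcond [RHS]big_mkcond; apply: eq_bigr => k _; rewrite /T.
have [kp|pk] := ltnP k (size p); have [ki|ik] := ltnP k i.+1 => //.
  by rewrite coef_pow_small ?mulr0.
by rewrite nth_default ?mul0r.
Qed.

Lemma eq_upto_comp {m p p' q q'} : q`_0 = 0 -> q'`_0 = 0 ->
  eq_upto m p p' -> eq_upto m q q' -> eq_upto m (p \Po q) (p' \Po q').
Proof.
move=> q0 q'0 hp hq i hi; rewrite !coef_comp_trunc //; apply: eq_bigr => k _.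
have lt_k : (k < m)%N by apply: leq_ltn_trans hi; rewrite -ltnS.
by rewrite hp // (eq_upto_pow k hq _ hi).
Qed.

Lemma approx_trunc m a : approx m a (\poly_(i < m) a i).
Proof. by move=> i hi; rewrite coef_poly hi. Qed.

Lemma approx_le {m m' a p} : (m' <= m)%N -> approx m a p -> approx m' a p.
Proof. by move=> le h i hi; apply: h; apply: leq_trans le. Qed.

Lemma approx_eq_upto {m a p q} : approx m a p -> eq_upto m p q -> approx m a q.
Proof. by move=> h1 h2 i hi; rewrite h1 ?h2. Qed.

Lemma approx_unique {m a p q} : approx m a p -> approx m a q -> eq_upto m p q.
Proof. by move=> h1 h2 i hi; rewrite -h1 ?h2. Qed.

Lemma fps_eq_approx a b :
  (forall n, exists2 p, approx n.+1 a p & approx n.+1 b p) -> a = b.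
Proof.
move=> h; apply: functional_extensionality => n.
by have [p ha hb] := h n; rewrite ha ?hb.
Qed.

Lemma approx_one {m} : approx m (fps_one C) 1.
Proof. by move=> i _; rewrite coef1 /fps_one /fps_const; case: (i == 0%N). Qed.

Lemma approx_X {m} : approx m (fps_X C) 'X.
Proof. by move=> i _; rewrite coefX /fps_X; case: (i == 1%N). Qed.

Lemma approx_opp {m a p} : approx m a p -> approx m (fps_opp a) (- p).
Proof. by move=> h i hi; rewrite coefN /fps_opp h. Qed.

Lemma approx_mul {m a b p q} :
  approx m a p -> approx m b q -> approx m (fps_mul a b) (p * q).
Proof.
move=> ha hb i hi; rewrite coefM /fps_mul; apply: eq_bigr => j _.
have lt_j : (j < m)%N by apply: leq_ltn_trans hi; rewrite -ltnS.
have lt_ij : (i - j < m)%N by apply: leq_ltn_trans hi; apply: leq_subr.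
by rewrite ha ?hb.
Qed.

Lemma approx_pow {m a p} k : approx m a p -> approx m (fps_pow a k) (p ^+ k).
Proof.
move=> h; elim: k => [|k IH]; first exact: approx_one.
by rewrite exprS; apply: approx_mul.
Qed.

Lemma approx_comp {m g f p q} : q`_0 = 0 ->
  approx m g p -> approx m f q -> approx m (fps_comp g f) (p \Po q).
Proof.
move=> q0 hg hf i hi; rewrite coef_comp_trunc //; apply: eq_bigr => k _.
have lt_k : (k < m)%N by apply: leq_ltn_trans hi; rewrite -ltnS.
by rewrite hg // (approx_pow k hf _ hi).
Qed.

Lemma approx_deriv {m a p} : approx m.+1 a p -> approx m (fps_deriv a) p^`().
Proof. by move=> h i hi; rewrite coef_deriv /fps_deriv h // mulr_natl. Qed.

Lemma approx_divX {m a p} : approx m.+1 a p -> approx m (fps_divX a) (drop_poly 1 p).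
Proof. by move=> h i hi; rewrite coef_drop_poly addn1 /fps_divX h. Qed.

Lemma fps_inv_upto_size a n : size (fps_inv_upto a n) = n.+1.
Proof. by elim: n => //= n IH; rewrite size_rcons IH. Qed.

Lemma fps_inv_uptoE a n i : (i <= n)%N -> nth 0 (fps_inv_upto a n) i = fps_inv a i.
Proof.
elim: n => [|n IH]; first by rewrite leqn0 => /eqP ->.
rewrite leq_eqVlt => /orP[/eqP -> //|lt_in].
by rewrite /= nth_rcons fps_inv_upto_size lt_in IH.
Qed.

Lemma fps_invS a n : fps_inv a n.+1 =
  - (a 0%N)^-1 * \sum_(j < n.+1) a j.+1 * fps_inv a (n - j)%N.
Proof.
rewrite {1}/fps_inv /= nth_rcons fps_inv_upto_size ltnn eqxx.
by congr (_ * _); apply: eq_bigr => j _; rewrite fps_inv_uptoE // leq_subr.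
Qed.

Lemma fps_mul_inv a : a 0%N != 0 -> fps_mul a (fps_inv a) = fps_one C.
Proof.
move=> a0; apply: functional_extensionality => -[|n].
  by rewrite /fps_mul big_ord1 /fps_inv /= mulfV.
rewrite /fps_mul big_ord_recl fps_invS /fps_one /fps_const /=.
set S := \sum_(i < n.+1) _.
have -> : S = \sum_(j < n.+1) a j.+1 * fps_inv a (n - j)%N by apply: eq_bigr.
by rewrite mulrA mulrN mulfV // mulN1r addNr.
Qed.

Lemma fps_mulr1 a : fps_mul a (fps_one C) = a.
Proof.
apply: fps_eq_approx => n; have aA := approx_trunc n.+1 a.
by exists (\poly_(i < n.+1) a i * 1); [exact: approx_mul aA approx_one | rewrite mulr1].
Qed.

Lemma coef0_trunc m {f} : f 0%N = 0 -> (\poly_(i < m) f i)`_0 = 0.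
Proof. by rewrite coef_poly; case: m. Qed.

Section Composition.
Variable f : fps C.
Hypothesis f0 : f 0%N = 0.

Lemma fps_comp_one : fps_comp (fps_one C) f = fps_one C.
Proof.
apply: fps_eq_approx => n; pose F := \poly_(i < n.+1) f i.
exists (1 \Po F); last by rewrite comp_polyC; exact: approx_one.
exact: approx_comp (coef0_trunc _ f0) approx_one (approx_trunc _ _).
Qed.

Lemma fps_comp_oppX : fps_comp (fps_opp (fps_X C)) f = fps_opp f.
Proof.
apply: fps_eq_approx => n; pose F := \poly_(i < n.+1) f i.
exists ((- 'X) \Po F); last by rewrite comp_polyNl comp_polyX; apply/approx_opp/approx_trunc.
exact: approx_comp (coef0_trunc _ f0) (approx_opp approx_X) (approx_trunc _ _).
Qed.

Lemma fps_comp_oppK :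
  fps_comp (fps_opp f) (fps_opp f) = fps_opp (fps_comp f (fps_opp f)).
Proof.
apply: fps_eq_approx => n; pose F := \poly_(i < n.+1) f i.
have aF : approx n.+1 f F by apply: approx_trunc.
have H0 : (- F)`_0 = 0 by rewrite coefN coef0_trunc ?oppr0.
exists ((- F) \Po (- F)); first exact: approx_comp H0 (approx_opp aF) (approx_opp aF).
by rewrite comp_polyNl; apply/approx_opp/(approx_comp H0 aF (approx_opp aF)).
Qed.

End Composition.

Section HittingTimeInvolution.
(* Polynomial form of the argument: F plays the role of f truncated,
   H = -F, D = F/X, and V an approximate inverse of D. *)
Variables (F V : {poly C}) (m : nat).
Hypothesis F0 : F`_0 = 0.
Local Notation H := (- F).
Local Notation D := (drop_poly 1 F).
Hypothesis inv_HH : eq_upto m.+1 (H \Po H) 'X.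

Let H0 : H`_0 = 0. Proof. by rewrite coefN F0 oppr0. Qed.

(* Chain rule applied to H(H) = X. *)
Lemma deriv_involution : eq_upto m ((F^`() \Po H) * F^`()) 1.
Proof.
have := eq_upto_deriv inv_HH.
by rewrite deriv_comp derivX derivN comp_polyNl mulrNN.
Qed.

(* H(H) = -D(H) * H = D(H) * D * X, so cancelling X gives D(H) * D = 1. *)
Lemma divX_involution : eq_upto m ((D \Po H) * D) 1.
Proof.
apply: eq_upto_mulXK; rewrite mul1r -mulrA -(poly_divXK F0).
by rewrite -[_ * F]opprK -mulrN -comp_divX // -comp_polyNl.
Qed.

Hypothesis DV1 : eq_upto m.+1 (D * V) 1.

Lemma hitting_time_involution :
  eq_upto m (F^`() * V * ((F^`() * V) \Po H)) 1.
Proof.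
set G := F^`() * V.
have DVH : eq_upto m ((D \Po H) * (V \Po H)) 1.
  rewrite -comp_polyM -[X in eq_upto _ _ X]polyC1 -(comp_polyC 1 H).
  exact: eq_upto_comp H0 H0 (eq_upto_le (leqnSn m) DV1) (eq_upto_refl _ _).
apply: (eq_upto_trans (q := G * (G \Po H) * ((D \Po H) * D))).
  by rewrite -{1}[G * (G \Po H)]mulr1; apply/eq_upto_mul/eq_upto_sym/divX_involution.
have -> : G * (G \Po H) * ((D \Po H) * D) =
          ((F^`() \Po H) * F^`()) * (D * V) * ((D \Po H) * (V \Po H)).
  by rewrite /G comp_polyM; ring.
rewrite -[X in eq_upto _ _ X](mulr1 1) -[X in eq_upto _ _ (X * _)](mulr1 1).
apply: eq_upto_mul => //; apply: eq_upto_mul; first exact: deriv_involution.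
exact: eq_upto_le (leqnSn m) DV1.
Qed.

End HittingTimeInvolution.

Lemma fps_hitting_time_involution f : f 0%N = 0 -> f 1%N != 0 ->
  fps_comp (fps_opp f) (fps_opp f) = fps_X C ->
  fps_mul (zfprime_over_f f) (fps_comp (zfprime_over_f f) (fps_opp f)) = fps_one C.
Proof.
move=> f0 f1 inv_h; apply: fps_eq_approx => n; exists 1; last exact: approx_one.
pose F := \poly_(i < n.+3) f i; pose V := \poly_(i < n.+2) fps_inv (fps_divX f) i.
have aF : approx n.+3 f F by apply: approx_trunc.
have F0 : F`_0 = 0 := coef0_trunc _ f0.
have H0 : (- F)`_0 = 0 by rewrite coefN F0 oppr0.
have aH : approx n.+2 (fps_opp f) (- F) by apply/approx_opp/(approx_le (leqnSn _) aF).
have aD : approx n.+2 (fps_divX f) (drop_poly 1 F) by apply: approx_divX.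
have aG : approx n.+2 (zfprime_over_f f) (F^`() * V).
  by apply: approx_mul; [apply: approx_deriv | apply: approx_trunc].
have inv_HH : eq_upto n.+2 ((- F) \Po (- F)) 'X.
  by apply: approx_unique (approx_comp H0 aH aH) _; rewrite inv_h; exact: approx_X.
have DV1 : eq_upto n.+2 (drop_poly 1 F * V) 1.
  apply: approx_unique (approx_mul aD (approx_trunc _ _)) _.
  by rewrite fps_mul_inv //; exact: approx_one.
apply: approx_eq_upto (@hitting_time_involution F V n.+1 F0 inv_HH DV1).
exact: approx_le (leqnSn _) (approx_mul aG (approx_comp H0 aG aH)).
Qed.

End TruncatedSeries.

Theorem proposition19 (R : realType) (f : fps R[i]) :
  f 0%N = 0 -> f 1%N != 0 ->
  (pseudo_involution (zfprime_over_f f, f) <->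
   fps_opp (fps_comp f (fps_opp f)) = fps_X R[i]).
Proof.
move=> f0 f1; set g := zfprime_over_f f.
have LM : riordan_mul (g, f) (riordan_M R[i]) = (g, fps_opp f).
  by rewrite /riordan_mul /= fps_comp_one // fps_mulr1 fps_comp_oppX.
rewrite /pseudo_involution LM /riordan_mul /riordan_id /= fps_comp_oppK //.
split=> [[_ //]|inv_h]; congr (_, _) => //.
by apply: fps_hitting_time_involution; rewrite ?fps_comp_oppK.
Qed.
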